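(* Let $f_1,\dots,f_n$ be nondecreasing linear functions at least one of which is constant, let $\beta_{\min}=\min\{\beta(f_i)\mid\alpha(f_i)=0\}$, and let $\sigma$ be a locally optimal permutation. Let $q_\sigma=\max\{q\in[n]\mid\alpha(f_{\sigma(q)})=0\}$; note $f^\sigma$ is a constant function, identified with its value. Then: (i) $f^\sigma\le\beta_{\min}$; (ii) $f_{\sigma(q_\sigma)}$ is the constant function with value $\beta_{\min}$; (iii) $\theta(f_{\sigma(i)})\in[\theta(f^\sigma)-\pi,\theta(\beta_{\min})]_{2\pi}\cup\{\bot\}$ for every $i\in[q_\sigma]$; (iv) $\theta(f_{\sigma(i)})\in[\theta(\beta_{\min}),\theta(f^\sigma)+\pi]\cup\{\bot\}$ for every $i$ with $q_\sigma\le i\le n$.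
   Context: A linear function is $f(x)=ax+b$; $\alpha(f)=a$, $\beta(f)=b$; nondecreasing means $a\ge0$, constant means $a=0$. $\vec f=(b,1-a)^\top$, $\theta(f)\in[0,2\pi)$ its polar angle, $\theta(f)=\bot$ if $\vec f=0$; for a real $c$, $\theta(c)$ is the polar angle of $(c,1)^\top$. $[\theta_1,\theta_2]_{2\pi}=\{\theta\in[\lambda_1,\lambda_2]\mid\lambda_1-\theta_1,\lambda_2-\theta_2\in2\pi\mathbb{Z},\ \lambda_2-\lambda_1\in[0,2\pi)\}$; $[\cdot,\cdot]$ without subscript is an ordinary real interval. $f^\sigma=f_{\sigma(n)}\circ\cdots\circ f_{\sigma(1)}$. For $1\le\ell\le m<r\le n$, $\sigma_{\ell,m,r}$ swaps the adjacent blocks $(\sigma(\ell),\dots,\sigma(m))$ and $(\sigma(m+1),\dots,\sigma(r))$ of $\sigma$; $\sigma$ is locally optimal if $f^\sigma\le f^{\sigma_{\ell,m,r}}$ for all such $\ell,m,r$. *)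

From Stdlib Require Import Reals Lra Lia ZArith.
Open Scope R_scope.

Definition lin := (R * R)%type.
Definition alpha (f : lin) : R := fst f.
Definition beta (f : lin) : R := snd f.
Definition ev (f : lin) (x : R) : R := alpha f * x + beta f.

Definition polar_angle (x y : R) : R :=
  let r := sqrt (x * x + y * y) in
  if Rle_dec 0 y then acos (x / r) else 2 * PI - acos (x / r).

(* theta f : polar angle of vec f = (b, 1 - a); None stands for bottom
   (vec f = 0). *)
Definition theta (f : lin) : option R :=
  if Req_EM_T (beta f) 0 then
    if Req_EM_T (1 - alpha f) 0 then None
    else Some (polar_angle (beta f) (1 - alpha f))
  else Some (polar_angle (beta f) (1 - alpha f)).

Definition theta_c (c : R) : R := polar_angle c 1.

Definition in_or_bot (o : option R) (S : R -> Prop) : Prop :=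
  match o with None => True | Some t => S t end.

Definition cyc_interval (t1 t2 : R) (t : R) : Prop :=
  exists l1 l2 : R, l1 <= t <= l2 /\
    (exists k : Z, l1 - t1 = 2 * PI * IZR k) /\
    (exists k : Z, l2 - t2 = 2 * PI * IZR k) /\
    0 <= l2 - l1 < 2 * PI.

Definition interval (t1 t2 : R) (t : R) : Prop := t1 <= t <= t2.

(* Functions are indexed 1..n by F : nat -> lin; a permutation of [n]
   is sigma : nat -> nat, a bijection of {1,...,n}. *)
Definition is_perm (n : nat) (sigma : nat -> nat) : Prop :=
  (forall i, (1 <= i <= n)%nat -> (1 <= sigma i <= n)%nat) /\
  (forall i j, (1 <= i <= n)%nat -> (1 <= j <= n)%nat ->
     sigma i = sigma j -> i = j).

Fixpoint comp (F : nat -> lin) (sigma : nat -> nat) (k : nat) (x : R) : R :=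
  match k with
  | O => x
  | S k' => ev (F (sigma (S k'))) (comp F sigma k' x)
  end.

Definition fsig (n : nat) (F : nat -> lin) (sigma : nat -> nat) : R -> R :=
  comp F sigma n.

(* sigma_{l,m,r}: swap adjacent blocks (sigma(l..m)) and (sigma(m+1..r)). *)
Definition swap_blocks (sigma : nat -> nat) (l m r : nat) : nat -> nat :=
  fun i =>
    if (i <? l)%nat then sigma i
    else if (r <? i)%nat then sigma i
    else if (i <? l + (r - m))%nat then sigma (i + (m + 1 - l))%nat
    else sigma (i - (r - m))%nat.

Definition fle (f g : R -> R) : Prop := forall x, f x <= g x.

Definition locally_optimal (n : nat) (F : nat -> lin) (sigma : nat -> nat) : Prop :=
  forall l m r : nat, (1 <= l)%nat -> (l <= m)%nat -> (m < r)%nat -> (r <= n)%nat ->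
    fle (fsig n F sigma) (fsig n F (swap_blocks sigma l m r)).

(* Past the last constant function f_{sigma q} every slope is positive, so
   the tail f_{sigma n} o ... o f_{sigma (u+1)} (u >= q) is strictly increasing
   and can be cancelled from any local-optimality inequality, leaving an
   inequality between the two values that enter the tail.  Moving f_{sigma p}
   (p a constant) behind f_{sigma q} shows that beta (f_{sigma q}) is the least
   constant, and moving f_{sigma i} (i <= q) to the end or behind f_{sigma q}
   shows that its graph lies above the diagonal at c = f^sigma and at
   b = beta (f_{sigma q}).  For i > q, three swaps show that the value x
   entering f_{sigma i} satisfies c <= x <= b and f_{sigma i} x <= x, hence the
   graph lies below the diagonal at c or at b.  Finally
   sin (theta f - theta t) has the sign of t - f t, which turns these
   positions relative to the diagonal into the angular statements. *)

From Stdlib Require Import Reals Lra Lia List FinFun.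
Open Scope R_scope.

Lemma polar_radius_pos x y : ~ (x = 0 /\ y = 0) -> 0 < sqrt (x * x + y * y).
Proof.
  intros Hnz. apply sqrt_lt_R0.
  destruct (Req_dec x 0); destruct (Req_dec y 0); try tauto; nra.
Qed.

Lemma sqrt_one_sub_sqr_div_radius x y : ~ (x = 0 /\ y = 0) ->
  sqrt (1 - (x / sqrt (x * x + y * y))²) = Rabs y / sqrt (x * x + y * y).
Proof.
  intros Hnz. pose proof (polar_radius_pos x y Hnz) as Hr.
  set (r := sqrt (x * x + y * y)) in *.
  assert (Hrr : r * r = x * x + y * y) by (apply sqrt_sqrt; nra).
  replace (1 - (x / r)²) with ((Rabs y / r) * (Rabs y / r)).
  - apply sqrt_square.
    apply Rmult_le_pos; [apply Rabs_pos | left; apply Rinv_0_lt_compat; lra].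
  - replace (Rabs y / r * (Rabs y / r)) with (Rabs (y * y) / (r * r))
      by (rewrite Rabs_mult; field; lra).
    rewrite Rabs_pos_eq by nra. unfold Rsqr.
    replace (1 - x / r * (x / r)) with ((r * r - x * x) / (r * r)) by (field; lra).
    rewrite Hrr. f_equal. ring.
Qed.

Lemma polar_angle_spec x y : ~ (x = 0 /\ y = 0) ->
  0 <= polar_angle x y < 2 * PI /\
  x = sqrt (x * x + y * y) * cos (polar_angle x y) /\
  y = sqrt (x * x + y * y) * sin (polar_angle x y).
Proof.
  intros Hnz. pose proof (polar_radius_pos x y Hnz) as Hr.
  pose proof (sqrt_one_sub_sqr_div_radius x y Hnz) as Hs.
  unfold polar_angle. set (r := sqrt (x * x + y * y)) in *. set (u := x / r) in *.
  assert (Hrr : r * r = x * x + y * y) by (apply sqrt_sqrt; nra).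
  assert (Hu : -1 <= u <= 1).
  { assert (Hxu : u * u * (r * r) = x * x) by (unfold u; field; lra).
    assert (u * u <= 1) by (apply Rmult_le_reg_r with (r * r); nra).
    split; nra. }
  pose proof (acos_bound u) as HA. pose proof PI_RGT_0.
  pose proof (cos_acos u Hu) as HC. pose proof (sin_acos u Hu) as HS.
  destruct (Rle_dec 0 y) as [Hy | Hy].
  - rewrite Rabs_pos_eq in Hs by lra.
    split; [lra |]. split.
    + rewrite HC. unfold u. field. lra.
    + rewrite HS, Hs. field. lra.
  - rewrite Rabs_left in Hs by lra.
    assert (HA0 : 0 < acos u).
    { destruct (Req_dec (acos u) 0) as [E | E]; [| lra].
      rewrite E, cos_0 in HC. assert (Hxr : x = r * u) by (unfold u; field; lra).
      rewrite <- HC, Rmult_1_r in Hxr.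
      assert (y * y = 0) by (rewrite <- Hxr in Hrr; lra). nra. }
    split; [lra |].
    rewrite cos_minus, sin_minus, cos_2PI, sin_2PI, HC, HS, Hs.
    split; unfold u; field; lra.
Qed.

(* The sine of the angle from (p, 1) to (x, y) is their cross product over the
   product of the norms. *)
Lemma sin_polar_angle_sub_theta_c x y p : ~ (x = 0 /\ y = 0) ->
  exists K, 0 < K /\ sin (polar_angle x y - theta_c p) * K = p * y - x.
Proof.
  intros Hnz. destruct (polar_angle_spec x y Hnz) as [_ [Hx Hy]].
  destruct (polar_angle_spec p 1 ltac:(lra)) as [_ [Hp H1]].
  pose proof (polar_radius_pos x y Hnz). pose proof (polar_radius_pos p 1 ltac:(lra)).
  exists (sqrt (x * x + y * y) * sqrt (p * p + 1 * 1)). split; [nra |].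
  unfold theta_c. rewrite sin_minus.
  set (r := sqrt (x * x + y * y)) in *. set (s := sqrt (p * p + 1 * 1)) in *.
  set (phi := polar_angle x y) in *. set (t := polar_angle p 1) in *.
  replace (p * y - x) with ((s * cos t) * (r * sin phi) - (r * cos phi) * (s * sin t))
    by (rewrite <- Hx, <- Hy, <- Hp, <- H1; ring).
  ring.
Qed.

Lemma polar_angle_bounds x y : ~ (x = 0 /\ y = 0) -> 0 <= polar_angle x y < 2 * PI.
Proof. intros Hnz. apply (polar_angle_spec x y Hnz). Qed.

Lemma sin_nonneg_inv d : - PI < d < 2 * PI -> 0 <= sin d -> 0 <= d <= PI.
Proof.
  intros Hd Hs.
  destruct (Rlt_le_dec d 0). { pose proof (sin_lt_0_var d); lra. }
  destruct (Rle_lt_dec d PI); [lra |]. pose proof (sin_lt_0 d); lra.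
Qed.

Lemma sin_nonpos_inv d : - PI < d < 2 * PI -> sin d <= 0 -> d <= 0 \/ PI <= d.
Proof.
  intros Hd Hs.
  destruct (Rle_lt_dec d 0); [lra |].
  destruct (Rle_lt_dec PI d); [lra |]. pose proof (sin_gt_0 d); lra.
Qed.

Lemma theta_c_bounds p : 0 < theta_c p < PI.
Proof.
  destruct (polar_angle_spec p 1 ltac:(lra)) as [Hb [_ H1]].
  pose proof (polar_radius_pos p 1 ltac:(lra)).
  assert (Hsin : 0 < sin (theta_c p)) by (unfold theta_c; nra).
  assert (theta_c p <> 0) by (intros E; rewrite E, sin_0 in Hsin; lra).
  assert (theta_c p <> PI) by (intros E; rewrite E, sin_PI in Hsin; lra).
  destruct (Rlt_le_dec (theta_c p) PI); [unfold theta_c in *; lra |].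
  pose proof (sin_lt_0 (theta_c p)). unfold theta_c in *; lra.
Qed.

Lemma theta_c_antitone c b : c <= b -> theta_c b <= theta_c c.
Proof.
  intros Hcb. destruct (sin_polar_angle_sub_theta_c b 1 c ltac:(lra)) as [K [HK E]].
  pose proof (theta_c_bounds b); pose proof (theta_c_bounds c).
  assert (sin (theta_c b - theta_c c) <= 0) by (unfold theta_c at 1; nra).
  destruct (sin_nonpos_inv (theta_c b - theta_c c)); lra.
Qed.

Lemma in_or_bot_theta f (S : R -> Prop) :
  (~ (beta f = 0 /\ 1 - alpha f = 0) -> S (polar_angle (beta f) (1 - alpha f))) ->
  in_or_bot (theta f) S.
Proof.
  intros HS. unfold theta.
  destruct (Req_EM_T (beta f) 0); [destruct (Req_EM_T (1 - alpha f) 0) |];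
    simpl; tauto.
Qed.

Lemma sin_theta_sub_theta_c f x : ~ (beta f = 0 /\ 1 - alpha f = 0) ->
  exists K, 0 < K /\
    sin (polar_angle (beta f) (1 - alpha f) - theta_c x) * K = x - ev f x.
Proof.
  intros Hnz. destruct (sin_polar_angle_sub_theta_c _ _ x Hnz) as [K [HK E]].
  exists K. split; [exact HK |]. rewrite E. unfold ev. ring.
Qed.

Lemma theta_in_interval f c b : c <= b -> (ev f c <= c \/ ev f b <= b) ->
  in_or_bot (theta f) (interval (theta_c b) (theta_c c + PI)).
Proof.
  intros Hcb Hf. apply in_or_bot_theta. intros Hnz. unfold interval.
  pose proof (theta_c_antitone _ _ Hcb). pose proof (polar_angle_bounds _ _ Hnz).
  pose proof (theta_c_bounds c); pose proof (theta_c_bounds b).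
  set (phi := polar_angle (beta f) (1 - alpha f)) in *.
  destruct Hf as [Hf | Hf].
  - destruct (sin_theta_sub_theta_c f c Hnz) as [K [HK E]]. fold phi in E.
    assert (0 <= sin (phi - theta_c c)) by nra.
    pose proof (sin_nonneg_inv (phi - theta_c c)). lra.
  - destruct (sin_theta_sub_theta_c f b Hnz) as [K [HK E]]. fold phi in E.
    assert (0 <= sin (phi - theta_c b)) by nra.
    pose proof (sin_nonneg_inv (phi - theta_c b)). lra.
Qed.

Lemma theta_in_cyc_interval f c b : c <= b -> c <= ev f c -> b <= ev f b ->
  in_or_bot (theta f) (cyc_interval (theta_c c - PI) (theta_c b)).
Proof.
  intros Hcb Hfc Hfb. apply in_or_bot_theta. intros Hnz.
  pose proof (theta_c_antitone _ _ Hcb). pose proof (polar_angle_bounds _ _ Hnz).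
  pose proof (theta_c_bounds c); pose proof (theta_c_bounds b). pose proof PI_RGT_0.
  set (phi := polar_angle (beta f) (1 - alpha f)) in *.
  destruct (sin_theta_sub_theta_c f c Hnz) as [K [HK E]].
  destruct (sin_theta_sub_theta_c f b Hnz) as [K' [HK' E']].
  fold phi in E, E'.
  assert (sin (phi - theta_c c) <= 0) by nra.
  assert (sin (phi - theta_c b) <= 0) by nra.
  pose proof (sin_nonpos_inv (phi - theta_c c)).
  pose proof (sin_nonpos_inv (phi - theta_c b)).
  destruct (Rle_lt_dec phi (theta_c b)).
  - exists (theta_c c - PI), (theta_c b).
    repeat split; try lra; exists 0%Z; simpl; ring.
  - exists (theta_c c + PI), (theta_c b + 2 * PI).
    repeat split; try lra; exists 1%Z; simpl; ring.
Qed.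

Fixpoint comp_from (F : nat -> lin) (s : nat -> nat) (a k : nat) (x : R) : R :=
  match k with
  | O => x
  | S k' => ev (F (s (a + S k')%nat)) (comp_from F s a k' x)
  end.

Lemma comp_from_0 F s k x : comp F s k x = comp_from F s 0 k x.
Proof. induction k as [| k IH]; simpl; [reflexivity | rewrite IH; reflexivity]. Qed.

Lemma comp_from_add F s a k m x :
  comp_from F s a (k + m) x = comp_from F s (a + k) m (comp_from F s a k x).
Proof.
  induction m as [| m IH]; simpl.
  - rewrite Nat.add_0_r. reflexivity.
  - rewrite Nat.add_succ_r. simpl. rewrite IH.
    replace (a + S (k + m))%nat with (a + k + S m)%nat by lia. reflexivity.
Qed.

Lemma comp_from_ext F s t a b k x :
  (forall i, (1 <= i <= k)%nat -> s (a + i)%nat = t (b + i)%nat) ->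
  comp_from F s a k x = comp_from F t b k x.
Proof.
  induction k as [| k IH]; intros H; simpl; [reflexivity |].
  rewrite IH by (intros; apply H; lia). rewrite H by lia. reflexivity.
Qed.

Lemma comp_from_strict_mono F s a k x y :
  (forall i, (1 <= i <= k)%nat -> 0 < alpha (F (s (a + i)%nat))) ->
  x < y -> comp_from F s a k x < comp_from F s a k y.
Proof.
  induction k as [| k IH]; intros Hpos Hxy; simpl; [assumption |].
  pose proof (IH (fun i Hi => Hpos i ltac:(lia)) Hxy).
  pose proof (Hpos (S k) ltac:(lia)). unfold ev. nra.
Qed.

Definition comp_between F s u v x := comp_from F s u (v - u) x.

Lemma comp_between_0 F s k x : comp F s k x = comp_between F s 0 k x.
Proof. unfold comp_between. rewrite Nat.sub_0_r. apply comp_from_0. Qed.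

Lemma comp_between_trans F s u v w x : (u <= v <= w)%nat ->
  comp_between F s u w x = comp_between F s v w (comp_between F s u v x).
Proof.
  intros H. unfold comp_between.
  replace (w - u)%nat with ((v - u) + (w - v))%nat by lia.
  rewrite comp_from_add. replace (u + (v - u))%nat with v by lia. reflexivity.
Qed.

Lemma comp_between_nil F s u x : comp_between F s u u x = x.
Proof. unfold comp_between. rewrite Nat.sub_diag. reflexivity. Qed.

Lemma comp_between_pred F s i x : (1 <= i)%nat ->
  comp_between F s (i - 1) i x = ev (F (s i)) x.
Proof.
  intros Hi. unfold comp_between. replace (i - (i - 1))%nat with 1%nat by lia.
  simpl. replace (i - 1 + 1)%nat with i by lia. reflexivity.
Qed.

Lemma comp_between_const F s u p v x : (u < p <= v)%nat -> alpha (F (s p)) = 0 ->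
  comp_between F s u v x = comp_between F s p v (beta (F (s p))).
Proof.
  intros Hp Ha. rewrite (comp_between_trans F s u p v) by lia. f_equal.
  rewrite (comp_between_trans F s u (p - 1) p), comp_between_pred by lia.
  unfold ev. rewrite Ha. ring.
Qed.

Lemma comp_between_le_inv F s u v x y :
  (forall i, (u < i <= v)%nat -> 0 < alpha (F (s i))) ->
  comp_between F s u v x <= comp_between F s u v y -> x <= y.
Proof.
  intros Hpos Hle. destruct (Rle_lt_dec x y) as [| Hlt]; [assumption |].
  assert (comp_between F s u v y < comp_between F s u v x); [| lra].
  apply comp_from_strict_mono; [| assumption]. intros i Hi. apply Hpos. lia.
Qed.

Ltac swap_blocks_index :=
  intros ? ?; unfold swap_blocks;
  repeat match goal with |- context [Nat.ltb ?x ?y] => destruct (Nat.ltb_spec x y) end;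
  try lia; f_equal; lia.

Lemma comp_swap_blocks F s a k j t x : (1 <= k)%nat -> (1 <= j)%nat ->
  comp F (swap_blocks s (a + 1) (a + k) (a + k + j)) (a + k + j + t) x =
  comp_from F s (a + k + j) t
    (comp_from F s a k (comp_from F s (a + k) j (comp F s a x))).
Proof.
  intros Hk Hj. rewrite !comp_from_0.
  replace (a + k + j + t)%nat with (a + j + k + t)%nat by lia.
  rewrite !comp_from_add. simpl.
  rewrite (comp_from_ext F _ s (a + j + k) (a + k + j) t) by swap_blocks_index.
  rewrite (comp_from_ext F _ s (a + j) a k) by swap_blocks_index.
  rewrite (comp_from_ext F _ s a (a + k) j) by swap_blocks_index.
  rewrite (comp_from_ext F _ s 0 0 a) by swap_blocks_index.
  reflexivity.
Qed.

Lemma locally_optimal_swap n F s l m r : locally_optimal n F s ->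
  (1 <= l)%nat -> (l <= m)%nat -> (m < r)%nat -> (r <= n)%nat ->
  let z := comp F s (l - 1) 0 in
  comp_between F s r n (comp_between F s m r (comp_between F s (l - 1) m z)) <=
  comp_between F s r n (comp_between F s (l - 1) m (comp_between F s m r z)).
Proof.
  intros Hopt Hl Hlm Hmr Hrn z. specialize (Hopt l m r Hl Hlm Hmr Hrn 0).
  unfold fsig in Hopt. unfold z, comp_between.
  set (a := (l - 1)%nat) in *. set (k := (m - a)%nat). set (j := (r - m)%nat).
  set (t := (n - r)%nat).
  replace l with (a + 1)%nat in Hopt by lia.
  replace m with (a + k)%nat in * by lia.
  replace r with (a + k + j)%nat in * by lia.
  replace n with (a + k + j + t)%nat in * by lia.
  rewrite comp_swap_blocks in Hopt by lia.
  rewrite (comp_from_0 F s (a + k + j + t)), !comp_from_add, <- comp_from_0 in Hopt.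
  replace (a + k + j + t - (a + k + j))%nat with t by lia.
  replace (a + k + j - (a + k))%nat with j by lia.
  replace (a + k - a)%nat with k by lia.
  exact Hopt.
Qed.

Lemma is_perm_surj n s : is_perm n s -> forall i, (1 <= i <= n)%nat ->
  exists p, (1 <= p <= n)%nat /\ s p = i.
Proof.
  intros [Hrange Hinj] i Hi.
  assert (Hnd : NoDup (map s (seq 1 n))).
  { apply Injective_map_NoDup_in; [| apply seq_NoDup].
    intros x y Hx Hy. apply in_seq in Hx, Hy. apply Hinj; lia. }
  assert (Hincl : incl (seq 1 n) (map s (seq 1 n))).
  { apply NoDup_length_incl; [assumption | rewrite length_map; lia |].
    intros y Hy. apply in_map_iff in Hy. destruct Hy as [x [<- Hx]].
    apply in_seq in Hx. apply in_seq. specialize (Hrange x ltac:(lia)). lia. }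
  assert (Hmem : In i (seq 1 n)) by (apply in_seq; lia).
  apply Hincl, in_map_iff in Hmem. destruct Hmem as [p [Hp Hp']]. apply in_seq in Hp'.
  exists p. split; [lia | assumption].
Qed.

(* [t |-> ev f t - t] is affine, so it cannot be positive at both ends of an
   interval on which it takes a nonpositive value. *)
Lemma ev_le_at_endpoint f c x b : c <= x <= b -> ev f x <= x ->
  ev f c <= c \/ ev f b <= b.
Proof.
  intros Hx Hfx. unfold ev in *.
  destruct (Rle_dec 1 (alpha f)); [left | right]; nra.
Qed.

Section LocallyOptimal.

Variables (n : nat) (F : nat -> lin) (sigma : nat -> nat) (q : nat).
Hypothesis F_nondecreasing : forall i, (1 <= i <= n)%nat -> 0 <= alpha (F i).
Hypothesis sigma_perm : is_perm n sigma.
Hypothesis sigma_opt : locally_optimal n F sigma.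
Hypothesis q_bounds : (1 <= q <= n)%nat.
Hypothesis q_const : alpha (F (sigma q)) = 0.
Hypothesis q_last :
  forall j, (1 <= j <= n)%nat -> alpha (F (sigma j)) = 0 -> (j <= q)%nat.

Local Notation f i := (F (sigma i)).
Local Notation blk := (comp_between F sigma).
Local Notation c := (fsig n F sigma 0).
Local Notation b := (beta (F (sigma q))).

Lemma alpha_pos_after_last_const i : (q < i <= n)%nat -> 0 < alpha (f i).
Proof.
  intros Hi. destruct sigma_perm as [Hrange _].
  assert (0 <= alpha (f i)) by (apply F_nondecreasing, Hrange; lia).
  destruct (Req_dec (alpha (f i)) 0) as [E | E]; [| lra].
  specialize (q_last i ltac:(lia) E). lia.
Qed.

Lemma comp_between_to_last_const u y : (u < q)%nat -> blk u q y = b.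
Proof.
  intros Hu. rewrite (comp_between_const F sigma u q q) by (lia || assumption).
  apply comp_between_nil.
Qed.

Lemma fsig_from_last_const : c = blk q n b.
Proof.
  unfold fsig. rewrite comp_between_0, (comp_between_trans F sigma 0 q n) by lia.
  rewrite comp_between_to_last_const by lia. reflexivity.
Qed.

Lemma comp_between_before_last_const u y : (u < q)%nat -> blk u n y = c.
Proof.
  intros Hu.
  rewrite (comp_between_trans F sigma u q n), comp_between_to_last_const by lia.
  symmetry. apply fsig_from_last_const.
Qed.

Lemma comp_between_after_last_const_le_inv u x y : (q <= u)%nat ->
  blk u n x <= blk u n y -> x <= y.
Proof.
  intros Hu. apply comp_between_le_inv.
  intros i Hi. apply alpha_pos_after_last_const. lia.
Qed.

Lemma beta_last_const_le p : (1 <= p <= n)%nat -> alpha (f p) = 0 -> b <= beta (f p).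
Proof.
  intros Hp Hap. pose proof (q_last p Hp Hap) as Hpq.
  destruct (Nat.eq_dec p q) as [-> | Hne]; [lra |].
  pose proof (locally_optimal_swap n F sigma p p q sigma_opt
    ltac:(lia) ltac:(lia) ltac:(lia) ltac:(lia)) as Hswap. simpl in Hswap.
  rewrite !(comp_between_const F sigma (p - 1) p p), !comp_between_nil in Hswap
    by (lia || assumption).
  rewrite !(comp_between_to_last_const p) in Hswap by lia.
  exact (comp_between_after_last_const_le_inv q _ _ (le_n q) Hswap).
Qed.

Lemma fsig_le_beta_last_const : c <= b.
Proof.
  rewrite fsig_from_last_const. destruct (Nat.eq_dec q n) as [-> | Hne].
  { rewrite comp_between_nil. lra. }
  pose proof (locally_optimal_swap n F sigma q q n sigma_opt
    ltac:(lia) ltac:(lia) ltac:(lia) ltac:(lia)) as Hswap. simpl in Hswap.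
  rewrite !comp_between_nil, !(comp_between_to_last_const (q - 1)) in Hswap by lia.
  exact Hswap.
Qed.

Lemma ev_last_const t : ev (f q) t = b.
Proof. unfold ev. rewrite q_const. ring. Qed.

Lemma prefix_above_diagonal i : (1 <= i <= q)%nat ->
  c <= ev (f i) c /\ b <= ev (f i) b.
Proof.
  intros Hi. destruct (Nat.eq_dec i q) as [-> | Hne].
  { rewrite !ev_last_const. pose proof fsig_le_beta_last_const. lra. }
  split.
  - pose proof (locally_optimal_swap n F sigma i i n sigma_opt
      ltac:(lia) ltac:(lia) ltac:(lia) ltac:(lia)) as Hswap. simpl in Hswap.
    rewrite !comp_between_nil, !(comp_between_before_last_const i),
      comp_between_pred in Hswap by lia.
    exact Hswap.
  - pose proof (locally_optimal_swap n F sigma i i q sigma_opt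
      ltac:(lia) ltac:(lia) ltac:(lia) ltac:(lia)) as Hswap. simpl in Hswap.
    rewrite !(comp_between_to_last_const i), comp_between_pred in Hswap by lia.
    exact (comp_between_after_last_const_le_inv q _ _ (le_n q) Hswap).
Qed.

Lemma suffix_below_diagonal i : (q <= i <= n)%nat ->
  ev (f i) c <= c \/ ev (f i) b <= b.
Proof.
  intros Hi. destruct (Nat.eq_dec i q) as [-> | Hne].
  { right. rewrite ev_last_const. lra. }
  set (x := blk q (i - 1) b).
  assert (Hx : forall y, blk (q - 1) (i - 1) y = x).
  { intros y. rewrite (comp_between_trans F sigma (q - 1) q (i - 1)),
      comp_between_to_last_const by lia. reflexivity. }
  assert (Hxb : x <= b).
  { destruct (Nat.eq_dec (i - 1) q) as [E | E].
    { unfold x. rewrite E, comp_between_nil. lra. }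
    pose proof (locally_optimal_swap n F sigma q q (i - 1) sigma_opt
      ltac:(lia) ltac:(lia) ltac:(lia) ltac:(lia)) as Hswap. simpl in Hswap.
    rewrite !(comp_between_to_last_const (q - 1)) in Hswap by lia. fold x in Hswap.
    exact (comp_between_after_last_const_le_inv (i - 1) _ _ ltac:(lia) Hswap). }
  assert (Hcx : c <= x).
  { pose proof (locally_optimal_swap n F sigma q (i - 1) n sigma_opt
      ltac:(lia) ltac:(lia) ltac:(lia) ltac:(lia)) as Hswap. simpl in Hswap.
    rewrite !comp_between_nil, !Hx in Hswap.
    rewrite fsig_from_last_const, (comp_between_trans F sigma q (i - 1) n) by lia.
    exact Hswap. }
  assert (Hfx : ev (f i) x <= x).
  { pose proof (locally_optimal_swap n F sigma q (i - 1) i sigma_opt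
      ltac:(lia) ltac:(lia) ltac:(lia) ltac:(lia)) as Hswap. simpl in Hswap.
    rewrite !Hx, comp_between_pred in Hswap by lia.
    exact (comp_between_after_last_const_le_inv i _ _ ltac:(lia) Hswap). }
  exact (ev_le_at_endpoint (f i) c x b (conj Hcx Hxb) Hfx).
Qed.

End LocallyOptimal.

Theorem mainTheorem18 (n : nat) (F : nat -> lin) (sigma : nat -> nat)
  (bmin : R) (q : nat) :
  (* nondecreasing *)
  (forall i, (1 <= i <= n)%nat -> 0 <= alpha (F i)) ->
  (* at least one constant *)
  (exists i, (1 <= i <= n)%nat /\ alpha (F i) = 0) ->
  (* bmin = min { beta f_i | alpha f_i = 0 } *)
  (exists i, (1 <= i <= n)%nat /\ alpha (F i) = 0 /\ beta (F i) = bmin) ->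
  (forall i, (1 <= i <= n)%nat -> alpha (F i) = 0 -> bmin <= beta (F i)) ->
  is_perm n sigma ->
  locally_optimal n F sigma ->
  (* q = max { q in [n] | alpha f_{sigma q} = 0 } *)
  (1 <= q <= n)%nat -> alpha (F (sigma q)) = 0 ->
  (forall j, (1 <= j <= n)%nat -> alpha (F (sigma j)) = 0 -> (j <= q)%nat) ->
  let c := fsig n F sigma 0 in
  c <= bmin /\
  F (sigma q) = (0, bmin) /\
  (forall i, (1 <= i <= q)%nat ->
     in_or_bot (theta (F (sigma i))) (cyc_interval (theta_c c - PI) (theta_c bmin))) /\
  (forall i, (q <= i <= n)%nat ->
     in_or_bot (theta (F (sigma i))) (interval (theta_c bmin) (theta_c c + PI))).
Proof.
  intros Hnd _ [i0 [Hi0 [Ha0 Hb0]]] Hmin Hperm Hopt Hq Haq Hlast c.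
  assert (Hb : beta (F (sigma q)) = bmin).
  { destruct (is_perm_surj n sigma Hperm i0 Hi0) as [p [Hp Hsp]].
    apply Rle_antisym.
    - rewrite <- Hb0, <- Hsp.
      apply (beta_last_const_le n F sigma q); rewrite ?Hsp; assumption.
    - apply Hmin; [apply Hperm | ]; assumption. }
  rewrite <- Hb.
  assert (Hc : c <= beta (F (sigma q)))
    by (apply (fsig_le_beta_last_const n F sigma q); assumption).
  split; [exact Hc |]. split.
  { rewrite <- Haq. unfold alpha, beta. apply surjective_pairing. }
  split; intros i Hi.
  - destruct (prefix_above_diagonal n F sigma q Hnd Hperm Hopt Hq Haq Hlast i Hi).
    apply theta_in_cyc_interval; assumption.
  - apply theta_in_interval; [exact Hc |].
    exact (suffix_below_diagonal n F sigma q Hnd Hperm Hopt Hq Haq Hlast i Hi).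
Qed.
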